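(* The sequence $(C_n^{(3)})_{n\ge0}$ of three-Catalan numbers, $C_n^{(3)}=\binom{2n}{3n}_3-\binom{2n}{3n+1}_3$, is log-convex, i.e. $C_i^{(3)}C_{i+2}^{(3)}\ge \big(C_{i+1}^{(3)}\big)^2$ for all $i\ge0$.
   Context: The quadrinomial coefficients $\binom{n}{k}_3$ are defined by $(1+x+x^2+x^3)^n=\sum_{k\in\mathbb Z}\binom{n}{k}_3x^k$, with $\binom{n}{k}_3=0$ for $k<0$ or $k>3n$. *)

From mathcomp Require Import all_boot all_order all_algebra.
Set Implicit Arguments. Unset Strict Implicit. Unset Printing Implicit Defensive.
Import GRing.Theory Num.Theory.
Local Open Scope ring_scope.

(* quadrinomial coefficient binom(n,k)_3 = coefficient of x^k in
   (1 + x + x^2 + x^3)^n; automatically 0 for k > 3n (k < 0 never occurs here). *)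
Definition quad (n k : nat) : int :=
  ((1 + 'X + 'X^2 + 'X^3 : {poly int}) ^+ n)`_k.

Definition cat3 (n : nat) : int :=
  quad (2 * n) (3 * n) - quad (2 * n) (3 * n).+1.

(* For a polynomial p palindromic of degree D, the central drop
   (p^2)_D - (p^2)_{D+1} = sum_j p_j^2 - sum_j p_{j+1} p_j is half of
   p_0^2 + p_D^2 + sum_j (p_{j+1} - p_j)^2, hence nonnegative.  With g = 1 + X + X^2 + X^3,
   C_n is the central drop of (g^n)^2 at D = 3n, so C_n > 0 as (g^n)_0 = 1.  Applied to the
   palindromic p = g^i (s X^3 + t g^2) of degree 3i + 6, the central drop of p^2 is
   s^2 C_i + 2st C_{i+1} + t^2 C_{i+2}: this binary quadratic form is positive
   semidefinite, so its discriminant is nonpositive. *)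
From mathcomp Require Import all_boot all_order all_algebra.
From mathcomp Require Import ring zify.
Set Implicit Arguments. Unset Strict Implicit. Unset Printing Implicit Defensive.
Import GRing.Theory Num.Theory.
Local Open Scope ring_scope.

Section Palindromic.

Variable R : comNzRingType.
Implicit Types (p q : {poly R}) (c : R).

Definition palindromic (D : nat) p :=
  (size p <= D.+1)%N /\ forall k, (k <= D)%N -> p`_k = p`_(D - k).

Lemma coefM_bounded p q m n k : (size p <= m)%N -> (size q <= n)%N ->
  (p * q)`_k = \sum_(a < m) \sum_(b < n) (if (a + b == k)%N then p`_a * q`_b else 0).
Proof.
have monomialE (r : {poly R}) l : (size r <= l)%N -> r = \sum_(a < l) r`_a *: 'X^a.
  move=> Hr; rewrite -poly_def; apply/polyP => j; rewrite coef_poly.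
  by case: ltnP => // Hj; rewrite nth_default // (leq_trans Hr Hj).
move=> /monomialE {1}-> /monomialE {1}->.
rewrite mulr_suml coef_sum; apply: eq_bigr => a _.
rewrite mulr_sumr coef_sum; apply: eq_bigr => b _.
rewrite -scalerAl -scalerAr scalerA -exprD coefZ coefXn eq_sym.
by case: eqP; rewrite ?mulr1 ?mulr0.
Qed.

Lemma palindromicM D1 D2 p q :
  palindromic D1 p -> palindromic D2 q -> palindromic (D1 + D2) (p * q).
Proof.
move=> [Hp Pp] [Hq Pq]; split.
  apply: leq_trans (size_polyMleq _ _) _.
  by move: Hp Hq; case: (size p) => [|?]; case: (size q) => [|?] /=; lia.
move=> k Hk; rewrite !(coefM_bounded _ Hp Hq).
rewrite [in RHS](reindex_inj rev_ord_inj); apply: eq_bigr => a _.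
rewrite [in RHS](reindex_inj rev_ord_inj); apply: eq_bigr => b _ /=.
have Ha : (a <= D1)%N by rewrite -ltnS.
have Hb : (b <= D2)%N by rewrite -ltnS.
rewrite !subSS -(Pp a Ha) -(Pq b Hb).
by have -> : (D1 - a + (D2 - b) == D1 + D2 - k)%N = (a + b == k)%N by apply/eqP/eqP; lia.
Qed.

Lemma palindromic1 : palindromic 0 1.
Proof. by split; [rewrite size_poly1 | case]. Qed.

Lemma palindromicX D p n : palindromic D p -> palindromic (D * n) (p ^+ n).
Proof.
move=> Pp; elim: n => [|n IH]; first by rewrite muln0; exact: palindromic1.
by rewrite exprS mulnS; exact: palindromicM.
Qed.

Lemma palindromicD D p q :
  palindromic D p -> palindromic D q -> palindromic D (p + q).
Proof.
move=> [Hp Pp] [Hq Pq]; split.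
  by apply: leq_trans (size_polyD _ _) _; rewrite geq_max Hp Hq.
by move=> k Hk; rewrite !coefD (Pp k Hk) (Pq k Hk).
Qed.

Lemma palindromicCM D c p : palindromic D p -> palindromic D (c%:P * p).
Proof.
move=> [Hp Pp]; split; first by rewrite mul_polyC (leq_trans (size_scale_leq _ _)).
by move=> k Hk; rewrite !coefCM (Pp k Hk).
Qed.

Lemma palindromicXn n : palindromic n.*2 'X^n.
Proof.
split; first by rewrite size_polyXn -addnn ltnS leq_addr.
by move=> k Hk; rewrite !coefXn; congr (_ %:R); apply/eqP/eqP; lia.
Qed.

Definition central_drop D q := q`_D - q`_D.+1.

Lemma central_dropD D p q :
  central_drop D (p + q) = central_drop D p + central_drop D q.
Proof. by rewrite /central_drop !coefD; ring. Qed.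

Lemma central_dropCM D c q : central_drop D (c%:P * q) = c * central_drop D q.
Proof. by rewrite /central_drop !coefCM mulrBr. Qed.

Lemma central_drop_XnM D n q : central_drop (D + n) ('X^n * q) = central_drop D q.
Proof.
rewrite /central_drop !coefXnM.
have -> : (D + n < n)%N = false by lia.
have -> : ((D + n).+1 < n)%N = false by lia.
by rewrite addnK -addSn addnK.
Qed.

Lemma sum_sqr_sub_consecutive (a : nat -> R) D :
  2 * (\sum_(j < D.+1) a j ^+ 2 - \sum_(j < D) a j.+1 * a j) =
  a 0%N ^+ 2 + a D ^+ 2 + \sum_(j < D) (a j.+1 - a j) ^+ 2.
Proof.
elim: D => [|D IH]; first by rewrite !big_ord0 big_ord1; ring.
rewrite (big_ord_recr D.+1) /=; set S := \sum_(j < D.+1) a j ^+ 2 in IH *.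
rewrite !(big_ord_recr D) /=.
transitivity (2 * (S - \sum_(j < D) a j.+1 * a j) + 2 * (a D.+1 ^+ 2 - a D.+1 * a D));
  first by ring.
by rewrite IH; ring.
Qed.

End Palindromic.

Section PalindromicSquare.

Variable R : realDomainType.
Implicit Types (p : {poly R}).

Lemma palindromic_central_drop_sqr D p :
  palindromic D p -> p`_0 ^+ 2 <= 2 * central_drop D (p * p).
Proof.
move=> [Hs Pp].
have Emid : (p * p)`_D = \sum_(j < D.+1) p`_j ^+ 2.
  rewrite coefM; apply: eq_bigr => j _.
  by rewrite expr2 -(Pp j) // -ltnS.
have Enext : (p * p)`_D.+1 = \sum_(j < D) p`_j.+1 * p`_j.
  rewrite coefM big_ord_recl /= subn0 (nth_default 0 Hs) mulr0 add0r.
  rewrite big_ord_recr /= (nth_default 0 Hs) mul0r addr0.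
  by apply: eq_bigr => j _ /=; rewrite subSS -(Pp j) // ltnW.
rewrite /central_drop Emid Enext (sum_sqr_sub_consecutive (fun j => p`_j)).
rewrite -addrA lerDl addr_ge0 ?sqr_ge0 ?sumr_ge0 // => j _.
exact: sqr_ge0.
Qed.

End PalindromicSquare.

Lemma quadratic_form_discriminant (R : realDomainType) (a b c : R) : 0 < a ->
  (forall s t : R, 0 <= s ^+ 2 * a + 2 * s * t * b + t ^+ 2 * c) -> b ^+ 2 <= a * c.
Proof.
move=> Ha /(_ b (- a)).
have -> : b ^+ 2 * a + 2 * b * - a * b + (- a) ^+ 2 * c = a * (a * c - b ^+ 2) by ring.
by rewrite pmulr_rge0 // subr_ge0.
Qed.

Definition quadpoly : {poly int} := 1 + 'X + 'X^2 + 'X^3.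

Lemma palindromic_quadpoly : palindromic 3 quadpoly.
Proof.
split; first by apply/leq_sizeP => j; rewrite !coefD !coefXn coefX coef1; case: j => [|[|[|[|]]]].
by move=> k; rewrite !coefD !coefXn !coefX !coef1; case: k => [|[|[|[|]]]].
Qed.

Lemma cat3E n : cat3 n = central_drop (3 * n) (quadpoly ^+ n * quadpoly ^+ n).
Proof. by rewrite -exprD addnn -mul2n. Qed.

Lemma cat3_gt0 n : 0 < cat3 n.
Proof.
have := palindromic_central_drop_sqr (palindromicX n palindromic_quadpoly).
rewrite -cat3E -horner_coef0 horner_exp !hornerE expr1n.
by move=> H; lia.
Qed.

Lemma cat3_quadratic_form i (s t : int) :
  0 <= s ^+ 2 * cat3 i + 2 * s * t * cat3 i.+1 + t ^+ 2 * cat3 i.+2.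
Proof.
set q := quadpoly; set p := q ^+ i * (s%:P * 'X^3 + t%:P * q ^+ 2).
have Pp : palindromic (3 * i + 3.*2) p.
  apply: palindromicM; first exact: palindromicX palindromic_quadpoly.
  by apply: palindromicD; apply: palindromicCM;
    [exact: palindromicXn | exact: palindromicX palindromic_quadpoly].
have Epp : p * p = (s ^+ 2)%:P * ('X^6 * (q ^+ i * q ^+ i))
    + (2 * s * t)%:P * ('X^3 * (q ^+ i.+1 * q ^+ i.+1))
    + (t ^+ 2)%:P * (q ^+ i.+2 * q ^+ i.+2).
  by rewrite /p !exprSr; ring.
have := Order.POrderTheory.le_trans (sqr_ge0 _) (palindromic_central_drop_sqr Pp).
rewrite pmulr_rge0 // Epp !central_dropD !central_dropCM central_drop_XnM.
have -> : (3 * i + 3.*2 = 3 * i.+1 + 3)%N by lia.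
rewrite central_drop_XnM.
have -> : (3 * i.+1 + 3 = 3 * i.+2)%N by lia.
by rewrite /q -!cat3E.
Qed.

Theorem theorem3p1 (i : nat) : cat3 i * cat3 i.+2 >= cat3 i.+1 ^+ 2.
Proof. exact: quadratic_form_discriminant (cat3_gt0 i) (cat3_quadratic_form i). Qed.
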